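(* Let $n\ge 1$, let $K=\mathbb{R}^n_+=\{x\in\mathbb{R}^n: x_i\ge 0,\ i=1,\dots,n\}$, and let $\bar x\in K\cap\mathbb{Z}^n$. Then the recession cone of $Q(\bar x)$ is $K$, and $Q(\bar x)$ is a full-dimensional polyhedron. Moreover, if $\bar x\neq 0$ and $\ell:=\ell(\bar x)$, then the extreme points of $Q(\bar x)$ are precisely the points $v^1,\dots,v^{\ell}$, where $v^{\ell}=\bar x$ and, for $k=1,\dots,\ell-1$, $v^k$ is the point with entries $v^k_i=\bar x_i$ for $i=1,\dots,k-1$, $v^k_k=\bar x_k+1$, and $v^k_i=0$ for $i=k+1,\dots,n$.
   Context: The lexicographic order on $\mathbb{R}^n$ (associated with the standard basis): for $x,y\in\mathbb{R}^n$, $x\prec y$ iff $x\neq y$ and $x_i<y_i$, where $i$ is the smallest index with $x_i\neq y_i$; $\preceq,\succ,\succeq$ have the obvious meaning. For $\bar x\in K\cap\mathbb{Z}^n$, $Q(\bar x):=\operatorname{conv}\{x\in K\cap\mathbb{Z}^n: x\succeq\bar x\}$. For $\bar x\in K\setminus\{0\}$, the leading index $\ell(\bar x)$ is the largest index $i$ with $\bar x_i>0$. *)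

(* R : realType, points of R^n are row vectors 'rV[R]_n,
   coordinate i (0-based, i : 'I_n) of x is x ord0 i. Sets are classical sets. *)
From HB Require Import structures.
From mathcomp Require Import all_boot all_order all_algebra.
From mathcomp Require Import boolp classical_sets reals.
Set Implicit Arguments. Unset Strict Implicit. Unset Printing Implicit Defensive.
Import Order.TTheory GRing.Theory Num.Theory.
Local Open Scope ring_scope.
Local Open Scope classical_set_scope.

Section Defs.
Variables (R : realType) (n : nat).
Local Notation vec := 'rV[R]_n.

Definition Kplus : set vec := [set x | forall i : 'I_n, 0 <= x ord0 i].

Definition integral_pt (x : vec) : Prop :=
  forall i : 'I_n, exists z : int, x ord0 i = z%:~R.

Definition lex_lt (x y : vec) : Prop :=
  exists i : 'I_n, x ord0 i < y ord0 i /\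
    forall j : 'I_n, (j < i)%N -> x ord0 j = y ord0 j.
Definition lex_le (x y : vec) : Prop := x = y \/ lex_lt x y.

Definition conv (S : set vec) : set vec :=
  [set x | exists (m : nat) (w : 'I_m -> R) (p : 'I_m -> vec),
     (forall k, 0 <= w k) /\ \sum_(k < m) w k = 1 /\
     (forall k, S (p k)) /\ x = \sum_(k < m) w k *: p k].

Definition Q (xbar : vec) : set vec :=
  conv [set x | Kplus x /\ integral_pt x /\ lex_le xbar x].

Definition rec_cone (C : set vec) : set vec :=
  [set d | forall x, C x -> forall t : R, 0 <= t -> C (x + t *: d)].

Definition polyhedron (P : set vec) : Prop :=
  exists (m : nat) (a : 'I_m -> vec) (b : 'I_m -> R),
    P = [set x | forall k, \sum_(i < n) a k ord0 i * x ord0 i <= b k].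

(* full-dimensional: P contains n+1 affinely independent points x0, x0 + M_i
   (i.e. its affine hull has dimension n) *)
Definition full_dim (P : set vec) : Prop :=
  exists (x0 : vec) (M : 'M[R]_n),
    P x0 /\ (forall i : 'I_n, P (x0 + row i M)) /\ \rank M = n.

Definition extreme_points (C : set vec) : set vec :=
  [set x | C x /\ forall (y z : vec) (t : R), C y -> C z -> 0 < t -> t < 1 ->
      x = t *: y + (1 - t) *: z -> y = z].

Definition is_leading_index (x : vec) (l : 'I_n) : Prop :=
  0 < x ord0 l /\ forall j : 'I_n, (l < j)%N -> ~ (0 < x ord0 j).

(* the points v^k (0-based k): v^l = xbar, and for k < l,
   v^k_i = xbar_i (i < k), v^k_k = xbar_k + 1, v^k_i = 0 (i > k) *)
Definition vpt (xbar : vec) (l k : 'I_n) : vec :=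
  if k == l then xbar
  else \row_(i < n) (if (i < k)%N then xbar ord0 i
                     else if i == k then xbar ord0 k + 1 else 0).

End Defs.

From HB Require Import structures.
From mathcomp Require Import all_boot all_order all_algebra.
From mathcomp Require Import boolp classical_sets reals.
From mathcomp Require Import zify ring lra.
Set Implicit Arguments. Unset Strict Implicit. Unset Printing Implicit Defensive.
Import Order.TTheory GRing.Theory Num.Theory.
Local Open Scope ring_scope.
Local Open Scope classical_set_scope.

(* Q(xbar) is the polyhedron H = {x >= 0 : L_m(x) >= 0 for all m} ([cut_set]),
   where L_m ([lexcut]) has the weights w ([weight])
     L_m(x) = sum_(i <= m) w_(m,i) (x_i - xbar_i),
     w_(m,m) = 1,  w_(m,i) = xbar_m prod_(i < k < m) (1 + xbar_k)  (i < m).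
   The weights satisfy w_(m,j) = sum_(j < i <= m) w_(m,i) xbar_i: raising
   coordinate j by 1 pays exactly for lowering every later coordinate to 0,
   so each L_m is nonnegative on the integer points lexicographically above
   xbar.  Conversely, a point of H agreeing with xbar before coordinate k
   either dominates v^k or is a convex combination of v^k and a point of H
   agreeing with xbar up to coordinate k; by induction H is inside Q(xbar).
   The same splitting shows that every extreme point of H is some v^k, and
   v^k is extreme because the constraints of H that are tight at v^k have
   v^k as their only solution in H. *)

Section ConvexHull.
Variables (R : realType) (n : nat).
Implicit Types (S : set 'rV[R]_n) (x y z p r : 'rV[R]_n).

Lemma subset_conv S : S `<=` conv S.
Proof.
move=> p Sp; exists 1%N, (fun=> 1), (fun=> p).
by rewrite !big_ord1 scale1r.
Qed.

Lemma conv_convex S y z t : conv S y -> conv S z -> 0 <= t <= 1 ->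
  conv S (t *: y + (1 - t) *: z).
Proof.
move=> [m1 [w1 [p1 [w1_ge0 [w1_sum [p1S ->]]]]]].
move=> [m2 [w2 [p2 [w2_ge0 [w2_sum [p2S ->]]]]]] /andP[t_ge0 t_le1].
exists (m1 + m2)%N,
  (fun k => match split k with inl i => t * w1 i | inr j => (1 - t) * w2 j end),
  (fun k => match split k with inl i => p1 i | inr j => p2 j end).
have splitl (i : 'I_m1) : split (lshift m2 i) = inl i := unsplitK (inl _ i).
have splitr (j : 'I_m2) : split (rshift m1 j) = inr j := unsplitK (inr _ j).
split; first by move=> k; case: split => i; rewrite mulr_ge0 ?subr_ge0.
split.
  rewrite big_split_ord (eq_bigr (fun i => t * w1 i)) => [|i _]; last by rewrite splitl.
  rewrite (eq_bigr (fun j => (1 - t) * w2 j)) => [|j _]; last by rewrite splitr.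
  by rewrite -!mulr_sumr w1_sum w2_sum !mulr1 /= subrKC.
split; first by move=> k; case: split.
rewrite big_split_ord !scaler_sumr; congr (_ + _); apply: eq_bigr => i _.
  by rewrite splitl scalerA.
by rewrite splitr scalerA.
Qed.

Lemma conv_translate S c y : (forall p, S p -> S (p + c)) -> conv S y -> conv S (y + c).
Proof.
move=> Sc [m [w [p [w_ge0 [w_sum [pS ->]]]]]].
exists m, w, (fun k => p k + c); do 3!split => //; first by move=> k; apply: Sc.
under [RHS]eq_bigr do rewrite scalerDr.
by rewrite big_split /= -scaler_suml w_sum scale1r.
Qed.

Section AddOrthant.
Variable S : set 'rV[R]_n.
Hypothesis S_add_unit : forall p (N : nat) (i : 'I_n), S p -> S (p + N%:R *: 'e_i).

(* [y + c e_i] lies on the segment from [y] to [y + N e_i] for any integer [N >= c]. *)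
Lemma conv_add_unit y c (i : 'I_n) : conv S y -> 0 <= c -> conv S (y + c *: 'e_i).
Proof.
move=> Sy c_ge0.
have [N cN] : exists N : nat, c < N%:R by exists (Num.Def.archi_bound c); apply: archi_boundP.
have N_gt0 : 0 < N%:R :> R by apply: le_lt_trans cN.
have -> : y + c *: 'e_i = c / N%:R *: (y + N%:R *: 'e_i) + (1 - c / N%:R) *: y.
  rewrite scalerDr scalerA mulfVK ?gt_eqF // scalerBl scale1r.
  by apply/rowP => j; rewrite !mxE; ring.
apply: conv_convex => //; first by apply: conv_translate => // p; apply: S_add_unit.
by rewrite divr_ge0 ?ler_pdivrMr ?mul1r ?(ltW N_gt0) ?(ltW cN).
Qed.

Lemma conv_add_orthant y r : conv S y -> Kplus r -> conv S (y + r).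
Proof.
move=> Sy r_ge0; rewrite (row_sum_delta r).
elim/big_rec: _ => [|j v _ IH]; first by rewrite addr0.
by rewrite addrCA addrC; apply: conv_add_unit.
Qed.

End AddOrthant.

End ConvexHull.

Lemma convex_comb_eq0 (R : realFieldType) (A B t : R) :
  0 <= A -> 0 <= B -> 0 < t -> t < 1 -> t * A + (1 - t) * B = 0 -> A = 0 /\ B = 0.
Proof.
move=> A_ge0 B_ge0 t_gt0 t_lt1 AB0.
have tA_ge0 : 0 <= t * A by rewrite mulr_ge0 // ltW.
have tB_ge0 : 0 <= (1 - t) * B by rewrite mulr_ge0 // subr_ge0 ltW.
have /eqP : t * A = 0 by lra.
have /eqP : (1 - t) * B = 0 by lra.
by rewrite !mulf_eq0 subr_eq0 (gt_eqF t_gt0) (gt_eqF t_lt1) => /eqP-> /eqP->.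
Qed.

Lemma int_ltr_leD1 (R : realDomainType) (u v : R) :
  (exists z : int, u = z%:~R) -> (exists z : int, v = z%:~R) -> u < v -> u + 1 <= v.
Proof.
move=> [z1 ->] [z2 ->]; rewrite ltr_int -lezD1.
by rewrite -(ler_int R) intrD.
Qed.

Section OrthantClosed.
Variables (R : realType) (n : nat) (C : set 'rV[R]_n).
Hypothesis C_add_orthant : forall y r, C y -> Kplus r -> C (y + r).

Lemma rec_cone_orthant_closed x0 : C x0 -> C `<=` Kplus (n:=n) -> rec_cone C = Kplus (n:=n).
Proof.
move=> Cx0 C_ge0; apply/seteqP; split=> d; last first.
  move=> d_ge0 x Cx t t_ge0; apply: C_add_orthant => // i.
  by rewrite mxE mulr_ge0 ?d_ge0.
move=> rec_d i; rewrite leNgt; apply/negP => d_lt0.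
have x0_ge0 : 0 <= x0 ord0 i by apply: C_ge0.
have t_ge0 : 0 <= (x0 ord0 i + 1) / - d ord0 i.
  by rewrite divr_ge0 ?addr_ge0 // oppr_ge0 ltW.
have := C_ge0 _ (rec_d _ Cx0 _ t_ge0) i; rewrite !mxE.
have -> : (x0 ord0 i + 1) / - d ord0 i * d ord0 i = - (x0 ord0 i + 1).
  by field; rewrite lt_eqF.
lra.
Qed.

Lemma extreme_add_orthant x p r :
  extreme_points C x -> C p -> Kplus r -> x = p + r -> x = p.
Proof.
move=> [_ x_ext] Cp r_ge0 xE.
have rr_ge0 : Kplus (r + r) by move=> i; rewrite mxE addr_ge0.
have half_gt0 : 0 < 1 / 2 :> R by rewrite divr_gt0.
have half_lt1 : 1 / 2 < 1 :> R by rewrite ltr_pdivrMr ?mul1r ?ltr1n.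
have xE' : x = 1 / 2 *: p + (1 - 1 / 2) *: (p + (r + r)).
  by rewrite xE; apply/rowP => i; rewrite !mxE; field.
have /rowP pE := x_ext _ _ _ Cp (C_add_orthant Cp rr_ge0) half_gt0 half_lt1 xE'.
suff r0 : r = 0 by rewrite xE r0 addr0.
by apply/rowP => i; have := pE i; rewrite !mxE; lra.
Qed.

End OrthantClosed.

Lemma polyhedron_orthant_cap (R : realType) (n m : nat)
    (c : 'I_m -> 'I_n -> R) (b : 'I_m -> R) :
  polyhedron [set x | Kplus x /\ forall k, b k <= \sum_(i < n) c k i * x ord0 i].
Proof.
pose A (k : 'I_(n + m)) := match split k with inl i => - 'e_i | inr k => - \row_i c k i end.
pose B (k : 'I_(n + m)) : R := match split k with inl _ => 0 | inr k => - b k end.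
have sum_unit (i : 'I_n) (x : 'rV[R]_n) :
    \sum_j (- 'e_i : 'rV[R]_n) ord0 j * x ord0 j = - x ord0 i.
  rewrite (bigD1 i) //= big1 => [|j ji]; rewrite !mxE ?eqxx ?mulN1r ?addr0 //.
  by rewrite (negbTE ji) oppr0 mul0r.
have sum_opp (k : 'I_m) (x : 'rV[R]_n) :
    \sum_j (- \row_i c k i) ord0 j * x ord0 j = - \sum_j c k j * x ord0 j.
  by rewrite -sumrN; apply: eq_bigr => j _; rewrite !mxE mulNr.
exists (n + m)%N, A, B; apply/seteqP; split=> x /=.
  move=> [x_ge0 x_cut] k; rewrite /A /B; case: split => [i|k'].
    by rewrite sum_unit oppr_le0.
  by rewrite sum_opp lerN2.
move=> x_in; split=> [i|k].
  by have := x_in (lshift m i); rewrite /A /B (unsplitK (inl _ i)) sum_unit oppr_le0.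
by have := x_in (rshift n k); rewrite /A /B (unsplitK (inr _ k)) sum_opp lerN2.
Qed.

Section LexCuts.
Variables (R : realFieldType) (a : nat -> R).
Implicit Types (y z : nat -> R).

Definition weight (m i : nat) : R :=
  if i == m then 1 else if (i < m)%N then a m * \prod_(i.+1 <= k < m) (1 + a k) else 0.

Lemma weight_out m i : (m < i)%N -> weight m i = 0.
Proof. by move=> mi; rewrite /weight gtn_eqF // ltnNge ltnW. Qed.

Lemma weight_telescope j m : (j < m)%N ->
  weight m j = \sum_(j.+1 <= i < m.+1) weight m i * a i.
Proof.
move=> jm; have [d d_def] : exists d, (m - j.+1)%N = d by eexists.
elim: d j jm d_def => [|d IH] j jm d_def.
  have -> : m = j.+1 by lia.
  by rewrite big_nat1 /weight big_geq // eqxx ltnSn ltn_eqF // mul1r mulr1.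
have jm' : (j.+1 < m)%N by lia.
rewrite big_ltn ?ltnS // -IH //; last by lia.
by rewrite /weight !ltn_eqF // jm jm' (big_ltn jm'); ring.
Qed.

Definition lexcut (m : nat) y : R := \sum_(0 <= i < m.+1) weight m i * (y i - a i).

Lemma eq_lexcut m y z : (forall i, (i <= m)%N -> y i = z i) -> lexcut m y = lexcut m z.
Proof. by move=> yz; apply: eq_big_nat => i /andP[_ im]; rewrite yz. Qed.

Lemma lexcut_eq0 m y : (forall i, (i <= m)%N -> y i = a i) -> lexcut m y = 0.
Proof.
move=> ya; rewrite (eq_lexcut ya) /lexcut big1_seq // => i _.
by rewrite subrr mulr0.
Qed.

Lemma lexcut_split k m y : (k <= m)%N -> (forall i, (i < k)%N -> y i = a i) ->
  lexcut m y = weight m k * (y k - a k) + \sum_(k.+1 <= i < m.+1) weight m i * (y i - a i).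
Proof.
move=> km ya; rewrite /lexcut (@big_cat_nat _ _ _ k) ?(leqW km) //=.
rewrite big_nat_cond big1 ?add0r; first by rewrite big_ltn // ltnS.
by move=> i /andP[/andP[_ ik] _]; rewrite ya // subrr mulr0.
Qed.

Lemma lexcut_prefix m y : (forall i, (i < m)%N -> y i = a i) -> lexcut m y = y m - a m.
Proof.
by move=> ya; rewrite (lexcut_split (leqnn m)) // big_geq // addr0 /weight eqxx mul1r.
Qed.

Lemma lexcut_head k m y : (k < m)%N -> (forall i, (i < k)%N -> y i = a i) ->
  (forall i, (k < i <= m)%N -> y i = 0) -> lexcut m y = weight m k * (y k - a k - 1).
Proof.
move=> km ya y0; rewrite (lexcut_split (ltnW km)) // [RHS]mulrBr mulr1; congr (_ + _).
rewrite (weight_telescope km) -sumrN; apply: eq_big_nat => i ki.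
by rewrite y0 // sub0r mulrN.
Qed.

Lemma lexcut_comb m y z t :
  lexcut m (fun i => t * y i + (1 - t) * z i) = t * lexcut m y + (1 - t) * lexcut m z.
Proof. by rewrite /lexcut !mulr_sumr -big_split /=; apply: eq_bigr => i _; ring. Qed.

Lemma lexcut_affine m K (w : 'I_K -> R) (p : 'I_K -> nat -> R) : \sum_(k < K) w k = 1 ->
  lexcut m (fun i => \sum_(k < K) w k * p k i) = \sum_(k < K) w k * lexcut m (p k).
Proof.
move=> w_sum; rewrite /lexcut; under [RHS]eq_bigr do rewrite mulr_sumr.
rewrite exchange_big; apply: eq_bigr => i _.
have {1}-> : a i = \sum_(k < K) w k * a i by rewrite -mulr_suml w_sum mul1r.
by rewrite -sumrB mulr_sumr; apply: eq_bigr => k _; ring.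
Qed.

Lemma prefix_of_lexcut_eq0 k y : (forall m, (m < k)%N -> lexcut m y = 0) ->
  forall i, (i < k)%N -> y i = a i.
Proof.
elim: k => [//|k IH] cut0 i; rewrite ltnS leq_eqVlt => /orP[/eqP ->|ik]; last first.
  by apply: IH => // m mk; apply: cut0; apply: ltnW.
have ya : forall i, (i < k)%N -> y i = a i by apply: IH => m mk; apply: cut0; apply: ltnW.
by apply/eqP; rewrite -subr_eq0 -lexcut_prefix // cut0.
Qed.

Definition vseq (k i : nat) : R := if (i < k)%N then a i else if i == k then a k + 1 else 0.

Lemma lexcut_vseq m k : lexcut m (vseq k) = (m == k)%:R.
Proof.
have v_lt i : (i < k)%N -> vseq k i = a i by rewrite /vseq => ->.
case: (ltngtP m k) => [mk|km|->].
- by rewrite lexcut_eq0 // => i im; rewrite v_lt // (leq_ltn_trans im mk).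
- rewrite (lexcut_head km) // => [|i /andP[ki _]]; last first.
    by rewrite /vseq ltnNge (ltnW ki) gtn_eqF.
  by rewrite /vseq ltnn eqxx [a k + 1]addrC addrK subrr mulr0.
- by rewrite lexcut_prefix // /vseq ltnn eqxx addrAC subrr add0r.
Qed.

Hypothesis a_ge0 : forall i, 0 <= a i.

Lemma weight_ge0 m i : 0 <= weight m i.
Proof.
rewrite /weight; case: eqP => // _; case: ltnP => // _.
by rewrite mulr_ge0 // prodr_ge0 // => k _; rewrite addr_ge0.
Qed.

Lemma weight_gt0 m i : 0 < a m -> (i <= m)%N -> 0 < weight m i.
Proof.
move=> am_gt0; rewrite leq_eqVlt /weight => /orP[/eqP->|im]; first by rewrite eqxx.
rewrite ltn_eqF // im mulr_gt0 // prodr_gt0 // => k _.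
by rewrite ltr_wpDr.
Qed.

Lemma lexcut_ge0_jump j m y : (j <= m)%N -> (forall i, (i < j)%N -> y i = a i) ->
  a j + 1 <= y j -> (forall i, 0 <= y i) -> 0 <= lexcut m y.
Proof.
rewrite leq_eqVlt => /orP[/eqP <-|jm] ya yj y_ge0; first by rewrite lexcut_prefix //; lra.
rewrite (lexcut_split (ltnW jm)) //.
have sum_ge : - weight m j <= \sum_(j.+1 <= i < m.+1) weight m i * (y i - a i).
  rewrite (weight_telescope jm) -sumrN; apply: ler_sum => i _.
  by rewrite -mulrN ler_wpM2l ?weight_ge0 // lerDr.
have : weight m j <= weight m j * (y j - a j).
  by rewrite ler_peMr ?weight_ge0 // lerBrDl.
lra.
Qed.

End LexCuts.

Section LexHull.
Variables (R : realType) (n : nat) (xbar : 'rV[R]_n.+1).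
Hypotheses (xbar_ge0 : Kplus xbar) (xbar_int : integral_pt xbar).
Local Notation N := n.+1.
Local Notation vec := 'rV[R]_N.
Implicit Types (x y z p r : vec).

(* Indices [i >= N] wrap around to coordinate 0; they never matter, since
   [lexcut a m] only reads indices [i <= m < N]. *)
Definition rowseq x (i : nat) : R := x ord0 (inord i).

Local Notation a := (rowseq xbar).

Lemma rowseqE x (i : 'I_N) : rowseq x i = x ord0 i.
Proof. by rewrite /rowseq inord_val. Qed.

Lemma rowseq_inj x y : (forall i, (i < N)%N -> rowseq x i = rowseq y i) -> x = y.
Proof. by move=> xy; apply/rowP => i; have := xy i (ltn_ord i); rewrite !rowseqE. Qed.

Lemma rowseq_comb x y t :
  rowseq (t *: x + (1 - t) *: y) = fun i => t * rowseq x i + (1 - t) * rowseq y i.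
Proof. by apply/funext => i; rewrite /rowseq !mxE. Qed.

Lemma rowseq_ge0 x : Kplus x -> forall i, 0 <= rowseq x i.
Proof. by move=> x_ge0 i; apply: x_ge0. Qed.

Lemma lexcut_row_comb m x y t : lexcut a m (rowseq (t *: x + (1 - t) *: y)) =
  t * lexcut a m (rowseq x) + (1 - t) * lexcut a m (rowseq y).
Proof. by rewrite rowseq_comb lexcut_comb. Qed.

Lemma lexcut_rowE (m : 'I_N) x : lexcut a m (rowseq x) =
  \sum_(i < N) weight a m i * x ord0 i - \sum_(i < N) weight a m i * xbar ord0 i.
Proof.
have -> : \sum_(i < N) weight a m i * x ord0 i - \sum_(i < N) weight a m i * xbar ord0 i =
    \sum_(0 <= i < N) weight a m i * (rowseq x i - a i).
  by rewrite -sumrB big_mkord; apply: eq_bigr => i _; rewrite !rowseqE mulrBr.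
rewrite (@big_cat_nat _ _ _ m.+1) //= -[LHS]addr0; congr (_ + _).
by rewrite big_nat_cond big1 // => i /andP[/andP[mi _] _]; rewrite weight_out // mul0r.
Qed.

Definition lex_pts : set vec := [set x | Kplus x /\ integral_pt x /\ lex_le xbar x].

Definition cut_set : set vec :=
  [set x | Kplus x /\ forall m : 'I_N, 0 <= lexcut a m (rowseq x)].

Definition vrow (k : nat) : vec := \row_(i < N) vseq a k i.

Lemma rowseq_vrow k i : (i < N)%N -> rowseq (vrow k) i = vseq a k i.
Proof. by move=> iN; rewrite /rowseq mxE inordK. Qed.

Lemma lexcut_vrow (m : 'I_N) k : lexcut a m (rowseq (vrow k)) = (m == k :> nat)%:R.
Proof.
rewrite -(lexcut_vseq a); apply: eq_lexcut => i im.
by rewrite rowseq_vrow // (leq_ltn_trans im).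
Qed.

Lemma vpt_vrow l (k : 'I_N) : k != l -> vpt xbar l k = vrow k.
Proof. by move=> kl; rewrite /vpt (negbTE kl); apply/rowP => i; rewrite !mxE /vseq !rowseqE. Qed.

Lemma xbar_lex_pt : lex_pts xbar.
Proof. by split=> //; split=> //; left. Qed.

Lemma vrow_lex_pt (k : 'I_N) : lex_pts (vrow k).
Proof.
split; [|split].
- move=> i; rewrite mxE /vseq !rowseqE.
  by case: ifP => _; [|case: ifP => _]; rewrite ?addr_ge0 ?xbar_ge0.
- move=> i; rewrite mxE /vseq !rowseqE; case: ifP => _; first exact: xbar_int.
  case: ifP => _; last by exists 0.
  by have [z ->] := xbar_int k; exists (z + 1); rewrite intrD.
- right; exists k; rewrite mxE /vseq ltnn eqxx rowseqE ltrDl ltr01; split=> // j jk.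
  by rewrite mxE /vseq jk rowseqE.
Qed.

Lemma lex_pts_add_unit p (M : nat) (i : 'I_N) : lex_pts p -> lex_pts (p + M%:R *: 'e_i).
Proof.
move=> [p_ge0 [p_int p_lex]].
have E j : (p + M%:R *: 'e_i) ord0 j = p ord0 j + (if j == i :> nat then M%:R else 0).
  by rewrite !mxE eqxx val_eqE /=; case: (j == i); rewrite ?mulr1 ?mulr0.
split; [|split].
- by move=> j; rewrite E addr_ge0 //; case: ifP.
- move=> j; rewrite E; have [z ->] := p_int j; case: ifP => _.
    by exists (z + M%:Z); rewrite intrD pmulrn.
  by exists z; rewrite addr0.
case: M E => [|M] E; first by rewrite scale0r addr0.
have M_gt0 : 0 < M.+1%:R :> R by rewrite ltr0n.
right; case: p_lex => [->|[j [xj_lt eq_before]]].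
  by exists i; rewrite E eqxx ltrDl; split=> // j ji; rewrite E ltn_eqF // addr0.
case: (ltnP i j) => ij.
  exists i; rewrite E eqxx eq_before // ltrDl; split=> // j' j'i.
  by rewrite E ltn_eqF // addr0 eq_before // (ltn_trans j'i).
exists j; rewrite E; split.
  by apply: (lt_le_trans xj_lt); rewrite lerDl; case: ifP => // _; apply: ltW.
move=> j' j'j; rewrite E eq_before // ifN ?addr0 //.
by apply: contraTneq j'j => ->; rewrite -leqNgt.
Qed.

Lemma lex_pts_cut : lex_pts `<=` cut_set.
Proof.
move=> p [p_ge0 [p_int [<-|[j [xj_lt eq_before]]]]]; split=> // m.
  by rewrite lexcut_eq0.
have p_pre i : (i < j)%N -> rowseq p i = a i.
  by move=> ij; rewrite /rowseq eq_before // inordK // (ltn_trans ij).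
case: (leqP j m) => [jm|mj].
  apply: (lexcut_ge0_jump (rowseq_ge0 xbar_ge0) jm p_pre) => [|i]; last exact: p_ge0.
  by rewrite !rowseqE int_ltr_leD1.
by rewrite lexcut_eq0 // => i im; rewrite p_pre // (leq_ltn_trans im).
Qed.

Lemma Q_sub_cut : Q xbar `<=` cut_set.
Proof.
move=> _ [K [w [p [w_ge0 [w_sum [p_lex ->]]]]]].
have p_cut k := lex_pts_cut (p_lex k).
split=> [i|m].
  by rewrite summxE sumr_ge0 // => k _; rewrite mxE mulr_ge0 // (p_cut k).1.
have -> : rowseq (\sum_(k < K) w k *: p k) = fun i => \sum_(k < K) w k * rowseq (p k) i.
  by apply/funext => i; rewrite /rowseq summxE; apply: eq_bigr => k _; rewrite mxE.
by rewrite lexcut_affine // sumr_ge0 // => k _; rewrite mulr_ge0 // (p_cut k).2.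
Qed.

Lemma Q_add_orthant y r : Q xbar y -> Kplus r -> Q xbar (y + r).
Proof. by apply: conv_add_orthant => p M i; apply: lex_pts_add_unit. Qed.

Lemma cut_prefix_ge0 x (k : 'I_N) : cut_set x ->
  (forall i, (i < k)%N -> rowseq x i = a i) -> a k <= rowseq x k.
Proof. by move=> [_ x_cut] x_pre; have := x_cut k; rewrite lexcut_prefix // subr_ge0. Qed.

Lemma cut_dominates_vrow x (k : 'I_N) : cut_set x ->
  (forall i, (i < k)%N -> rowseq x i = a i) -> a k + 1 <= rowseq x k -> Kplus (x - vrow k).
Proof.
move=> [x_ge0 _] x_pre xk i; rewrite !mxE /vseq -!rowseqE.
case: (ltngtP i k) => [ik|ki|/val_inj ->]; first by rewrite x_pre // subrr.
  by rewrite subr0 rowseqE.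
by rewrite subr_ge0.
Qed.

Lemma cut_split x (k : 'I_N) : cut_set x -> (forall i, (i < k)%N -> rowseq x i = a i) ->
  rowseq x k - a k < 1 ->
  exists z, [/\ cut_set z, (forall i, (i <= k)%N -> rowseq z i = a i) &
    x = (rowseq x k - a k) *: vrow k + (1 - (rowseq x k - a k)) *: z].
Proof.
move=> x_cut x_pre; set t := rowseq x k - a k => t_lt1.
have t_ge0 : 0 <= t by rewrite subr_ge0 cut_prefix_ge0.
have t'_gt0 : 0 < 1 - t by rewrite subr_gt0.
pose z : vec := \row_(i < N) if (i <= k)%N then xbar ord0 i else x ord0 i / (1 - t).
have z_pre i : (i <= k)%N -> rowseq z i = a i.
  by move=> ik; rewrite /rowseq mxE inordK ?ik // (leq_ltn_trans ik).
have z_post i : (k < i < N)%N -> rowseq z i = rowseq x i / (1 - t).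
  by move=> /andP[ki iN]; rewrite /rowseq mxE inordK // leqNgt ki.
have xE : x = t *: vrow k + (1 - t) *: z.
  apply: rowseq_inj => i iN; rewrite rowseq_comb rowseq_vrow // /vseq.
  case: (ltngtP i k) => [ik|ki|->]; first by rewrite x_pre // z_pre 1?ltnW //; ring.
    by rewrite z_post ?ki //; field; rewrite gt_eqF.
  by rewrite z_pre // /t; ring.
exists z; split=> //; split=> [i|m].
  rewrite mxE; case: ifP => _; first exact: xbar_ge0.
  by apply: divr_ge0; [exact: x_cut.1 | exact: ltW].
case: (leqP m k) => [mk|km].
  by rewrite lexcut_eq0 // => i im; rewrite z_pre // (leq_trans im).
have := x_cut.2 m; rewrite {1}xE lexcut_row_comb lexcut_vrow gtn_eqF // mulr0 add0r.
by rewrite pmulr_rge0.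
Qed.

Lemma cut_sub_Q : cut_set `<=` Q xbar.
Proof.
suff Q_prefix d : (d <= N)%N -> forall x, cut_set x ->
    (forall i, (i < N - d)%N -> rowseq x i = a i) -> Q xbar x.
  by move=> x x_cut; apply: (Q_prefix N) => // i; rewrite subnn.
elim: d => [_ x _ x_pre|d IH dN x x_cut x_pre].
  suff -> : x = xbar by apply: subset_conv; exact: xbar_lex_pt.
  by apply: rowseq_inj => i iN; rewrite x_pre ?subn0.
have kN : (N - d.+1 < N)%N by rewrite ltn_subrL.
pose k := Ordinal kN.
case: (lerP 1 (rowseq x k - a k)) => [t_ge1|t_lt1].
  rewrite -[x](subrKC (vrow k)); apply: Q_add_orthant; first exact/subset_conv/vrow_lex_pt.
  by apply: cut_dominates_vrow => //; rewrite -lerBrDl.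
have [z [z_cut z_pre ->]] := cut_split (k := k) x_cut x_pre t_lt1.
apply: conv_convex; first exact/subset_conv/vrow_lex_pt.
  apply: IH => [|//|i id]; first exact: ltnW.
  by apply: z_pre; rewrite -ltnS /k /= -subSn.
by rewrite subr_ge0 cut_prefix_ge0 //= ltW.
Qed.

Lemma Q_eq_cut : Q xbar = cut_set.
Proof. by apply/seteqP; split; [exact: Q_sub_cut | exact: cut_sub_Q]. Qed.

Lemma rec_cone_Q : rec_cone (Q xbar) = Kplus (n:=N).
Proof.
apply: (rec_cone_orthant_closed Q_add_orthant (x0:=xbar)).
  exact/subset_conv/xbar_lex_pt.
by rewrite Q_eq_cut => x [].
Qed.

Lemma polyhedron_Q : polyhedron (Q xbar).
Proof.
have -> : Q xbar = [set x | Kplus x /\ forall m : 'I_N,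
    \sum_(i < N) weight a m i * xbar ord0 i <= \sum_(i < N) weight a m i * x ord0 i].
  rewrite Q_eq_cut; apply/seteqP; split=> x [x_ge0 x_cut]; split=> // m;
    by have := x_cut m; rewrite lexcut_rowE subr_ge0.
exact: polyhedron_orthant_cap.
Qed.

Lemma full_dim_Q : full_dim (Q xbar).
Proof.
exists xbar, 1%:M; split; first exact/subset_conv/xbar_lex_pt.
split; last exact: mxrank1.
move=> i; rewrite row1 -[X in xbar + X]scale1r; apply: subset_conv.
exact: (lex_pts_add_unit 1 i xbar_lex_pt).
Qed.

Lemma cut_add_orthant y r : cut_set y -> Kplus r -> cut_set (y + r).
Proof. by rewrite -Q_eq_cut; apply: Q_add_orthant. Qed.

Lemma cut_comb_tight x y t : cut_set x -> cut_set y -> 0 < t -> t < 1 ->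
  (forall m : 'I_N, lexcut a m (rowseq (t *: x + (1 - t) *: y)) = 0 ->
     lexcut a m (rowseq x) = 0 /\ lexcut a m (rowseq y) = 0) /\
  (forall i : 'I_N, (t *: x + (1 - t) *: y) ord0 i = 0 -> x ord0 i = 0 /\ y ord0 i = 0).
Proof.
move=> [x_ge0 x_cut] [y_ge0 y_cut] t_gt0 t_lt1; split=> [m|i].
  by rewrite lexcut_row_comb; apply: convex_comb_eq0.
by rewrite !mxE; apply: convex_comb_eq0.
Qed.

Lemma tight_eq_xbar y : (forall m : 'I_N, lexcut a m (rowseq y) = 0) -> y = xbar.
Proof.
move=> y_tight; apply: rowseq_inj; apply: prefix_of_lexcut_eq0 => m mN.
exact: (y_tight (Ordinal mN)).
Qed.

Lemma extreme_jump x (k : 'I_N) : extreme_points cut_set x ->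
  (forall i, (i < k)%N -> rowseq x i = a i) -> rowseq x k != a k -> x = vrow k.
Proof.
move=> x_ext x_pre xk; have vk_cut := lex_pts_cut (vrow_lex_pt k).
case: (lerP 1 (rowseq x k - a k)) => [t_ge1|t_lt1].
  apply: (extreme_add_orthant cut_add_orthant x_ext vk_cut (r := x - vrow k)).
    by apply: cut_dominates_vrow x_ext.1 x_pre _; rewrite -lerBrDl.
  by rewrite subrKC.
have [z [z_cut _ xE]] := cut_split x_ext.1 x_pre t_lt1.
have t_gt0 : 0 < rowseq x k - a k.
  by rewrite lt_def subr_eq0 xk subr_ge0 (cut_prefix_ge0 x_ext.1).
have vz := x_ext.2 _ _ _ vk_cut z_cut t_gt0 t_lt1 xE.
by rewrite xE -vz -scalerDl subrKC scale1r.
Qed.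

Section Lead.
Variable l : 'I_N.
Hypothesis xbar_lead : is_leading_index xbar l.

Lemma xbar_after_lead i : (l < i < N)%N -> a i = 0.
Proof.
move=> /andP[li iN]; have := xbar_lead.2 (Ordinal iN) li; rewrite -rowseqE /= => a_ngt0.
by apply/eqP; rewrite eq_le (rowseq_ge0 xbar_ge0) andbT leNgt; apply/negP.
Qed.

Lemma xbar_lead_gt0 : 0 < a l.
Proof. by rewrite rowseqE; exact: xbar_lead.1. Qed.

Lemma extreme_prefix_lead x : extreme_points cut_set x ->
  (forall i, (i < l)%N -> rowseq x i = a i) -> x = xbar.
Proof.
move=> x_ext x_pre.
apply: (extreme_add_orthant cut_add_orthant x_ext (lex_pts_cut xbar_lex_pt) (r := x - xbar)).
  move=> i; rewrite !mxE subr_ge0 -!rowseqE.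
  case: (ltngtP i l) => [il|li|/val_inj ->]; first by rewrite x_pre.
    by rewrite xbar_after_lead ?li ?ltn_ord //; apply: x_ext.1.1.
  by have := cut_prefix_ge0 x_ext.1 x_pre.
by rewrite subrKC.
Qed.

Lemma tight_eq_vrow y (k : 'I_N) : (k < l)%N ->
  (forall m : 'I_N, m != k -> lexcut a m (rowseq y) = 0) ->
  (forall i : 'I_N, (k < i)%N -> y ord0 i = 0) -> y = vrow k.
Proof.
move=> kl y_tight y0.
have y_pre : forall i, (i < k)%N -> rowseq y i = a i.
  apply: prefix_of_lexcut_eq0 => m mk.
  have mN : (m < N)%N := ltn_trans mk (ltn_ord k).
  by apply: (y_tight (Ordinal mN)); rewrite -val_eqE /= ltn_eqF.
have y_post i : (k < i < N)%N -> rowseq y i = 0.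
  by move=> /andP[ki iN]; rewrite -[i]/(nat_of_ord (Ordinal iN)) rowseqE y0.
have lk : l != k by rewrite -val_eqE /= gtn_eqF.
have := y_tight l lk; rewrite (lexcut_head kl y_pre) => [|i /andP[ki il]]; last first.
  by rewrite y_post // ki (leq_ltn_trans il).
move/eqP; rewrite mulf_eq0 (gt_eqF (weight_gt0 (rowseq_ge0 xbar_ge0) xbar_lead_gt0 (ltnW kl))) /=.
rewrite subr_eq0 subr_eq addrC => /eqP yk.
apply: rowseq_inj => i iN; rewrite rowseq_vrow // /vseq.
by case: (ltngtP i k) => [ik|ki|->]; [exact: y_pre | rewrite y_post ?ki |].
Qed.

Lemma extreme_sub_vpt :
  extreme_points cut_set `<=` [set vpt xbar l k | k in [set k : 'I_N | (k <= l)%N]].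
Proof.
move=> x x_ext.
case: (pselect (exists i, (i < l)%N && (rowseq x i != a i))) => [jump|no_jump]; last first.
  exists l; first by rewrite /= leqnn.
  rewrite /vpt eqxx; apply/esym/extreme_prefix_lead => // i il.
  by apply/eqP; move: no_jump; apply: contra_notT => xi; exists i; rewrite il xi.
have [k /andP[kl xk] k_min] := ex_minnP jump.
have kN : (k < N)%N := ltn_trans kl (ltn_ord l).
exists (Ordinal kN); first exact: ltnW.
rewrite vpt_vrow; last by rewrite -val_eqE /= ltn_eqF.
apply/esym/(extreme_jump x_ext) => // i ik.
by apply/eqP; move: (ik); apply: contraTT => xi; rewrite -leqNgt k_min // (ltn_trans ik kl) xi.
Qed.

Lemma vpt_extreme (k : 'I_N) : (k <= l)%N -> extreme_points cut_set (vpt xbar l k).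
Proof.
move=> kl; have [->|k_ne_l] := eqVneq k l.
  rewrite /vpt eqxx; split; first exact: lex_pts_cut xbar_lex_pt.
  move=> y z t y_cut z_cut t_gt0 t_lt1 xE.
  have [tight _] := cut_comb_tight y_cut z_cut t_gt0 t_lt1.
  have cut0 (m : 'I_N) : lexcut a m (rowseq y) = 0 /\ lexcut a m (rowseq z) = 0.
    by apply: tight; rewrite -xE lexcut_eq0.
  have -> : y = xbar by apply: tight_eq_xbar => m; exact: (cut0 m).1.
  by apply/esym/tight_eq_xbar => m; exact: (cut0 m).2.
rewrite vpt_vrow //; split; first exact/lex_pts_cut/vrow_lex_pt.
move=> y z t y_cut z_cut t_gt0 t_lt1 vE.
have k_lt_l : (k < l)%N by rewrite ltn_neqAle kl andbT val_eqE.
have [tight tight0] := cut_comb_tight y_cut z_cut t_gt0 t_lt1.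
have cut0 (m : 'I_N) : m != k -> lexcut a m (rowseq y) = 0 /\ lexcut a m (rowseq z) = 0.
  by move=> mk; apply: tight; rewrite -vE lexcut_vrow val_eqE (negbTE mk).
have coord0 (i : 'I_N) : (k < i)%N -> y ord0 i = 0 /\ z ord0 i = 0.
  by move=> ki; apply: tight0; rewrite -vE mxE /vseq ltnNge (ltnW ki) gtn_eqF.
have -> : y = vrow k.
  by apply: tight_eq_vrow => // [m /cut0[]|i /coord0[]].
by apply/esym/tight_eq_vrow => // [m /cut0[]|i /coord0[]].
Qed.

Lemma extreme_points_cut :
  extreme_points cut_set = [set vpt xbar l k | k in [set k : 'I_N | (k <= l)%N]].
Proof.
apply/seteqP; split; first exact: extreme_sub_vpt.
by move=> _ [k kl <-]; apply: vpt_extreme.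
Qed.

End Lead.

End LexHull.

Theorem lemma1 (R : realType) (n : nat) (hn : (1 <= n)%N) (xbar : 'rV[R]_n)
    (hK : Kplus xbar) (hZ : integral_pt xbar) :
  rec_cone (Q xbar) = Kplus (n:=n) /\ polyhedron (Q xbar) /\ full_dim (Q xbar) /\
  (xbar <> 0 -> forall l : 'I_n, is_leading_index xbar l ->
     extreme_points (Q xbar) = [set vpt xbar l k | k in [set k : 'I_n | (k <= l)%N]]).
Proof.
case: n hn xbar hK hZ => [//|n] _ xbar hK hZ.
split; first exact: rec_cone_Q hK hZ.
split; first exact: polyhedron_Q hK hZ.
split; first exact: full_dim_Q hK hZ.
by move=> _ l hl; rewrite (Q_eq_cut hK hZ); exact: extreme_points_cut hl.
Qed.
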